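(* Let $n\ge 4$, let $s_i=(i,i+1)\in S_n$, and let $\pi:S_n\to\mathrm{O}(V)$ be a real representation. Put $h_\pi=\frac{\chi_\pi(1)-\chi_\pi(s_1s_3)}{2}$. Let $1\le i,k\le n-1$ with $|i-k|>1$, and let $c_i,c_k\in\mathrm{Pin}(V)$ satisfy $\rho(c_i)=\pi(s_i)$, $\rho(c_k)=\pi(s_k)$ and $c_i^2=c_k^2=1$. Then $c_ic_k=c_kc_i$ if and only if $h_\pi$ is a multiple of $4$.
   Context: $V$ is a Euclidean space and $\chi_\pi$ the character of $\pi$. $\mathrm{Pin}(V)$ is the Pin group of $V$ defined inside the Clifford algebra $C(V)$ (tensor algebra modulo the ideal generated by $v\otimes v+|v|^2$), and $\rho:\mathrm{Pin}(V)\to\mathrm{O}(V)$ is the standard double cover with kernel $\{\pm1\}$, sending a unit vector $v$ to the reflection in $v^\perp$. *)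

From HB Require Import structures.
From mathcomp Require Import all_boot all_order all_algebra all_fingroup.
From mathcomp Require Import reals.
Set Implicit Arguments. Unset Strict Implicit. Unset Printing Implicit Defensive.
Import Order.TTheory GRing.Theory Num.Theory.
Local Open Scope ring_scope.

(* The Euclidean space V is modelled as 'rV[R]_d with the standard inner
   product; a matrix M : 'M_d is identified with the linear map v |-> v *m M. *)
Definition sqnorm (R : realType) (d : nat) (v : 'rV[R]_d) : R := (v *m v^T) 0 0.

(* Adjacent transposition s_i = (i, i+1) in S_n, with 1-based indices
   (i.e. it swaps the 0-based points i-1 and i of 'I_n).  Only meaningful
   for 1 <= i <= n-1, where both points exist. *)
Definition adjtr (n i : nat) : 'S_n :=
  match @insub _ (fun x => x < n)%N (ordinal n) i.-1, @insub _ (fun x => x < n)%N (ordinal n) i with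
  | Some a, Some b => tperm a b
  | _, _ => 1%g
  end.

Definition character (R : realType) (n d : nat) (pi : 'S_n -> 'M[R]_d) (g : 'S_n) : R :=
  \tr (pi g).

Definition h_pi (R : realType) (n d : nat) (pi : 'S_n -> 'M[R]_d) : R :=
  (character pi 1%g - character pi (adjtr n 1 * adjtr n 3)%g) / 2.

(* (A, iota) is the Clifford algebra C(V) of V = 'rV[R]_d, i.e. the quotient
   of the tensor algebra by the ideal generated by v (x) v + |v|^2, given by
   its universal property: iota v ^+ 2 = - |v|^2, and every linear map f into
   an R-algebra with f v ^+ 2 = - |v|^2 factors uniquely through an algebra
   morphism A -> B. *)
Definition is_clifford (R : realType) (d : nat) (A : algType R)
    (iota : {linear 'rV[R]_d -> A}) : Prop :=
  (forall v, iota v * iota v = - (sqnorm v)%:A) /\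
  (forall (B : algType R) (f : {linear 'rV[R]_d -> B}),
     (forall v, f v * f v = - (sqnorm v)%:A) ->
     exists g : {lrmorphism A -> B},
       (forall v, g (iota v) = f v) /\
       (forall h : {lrmorphism A -> B}, (forall v, h (iota v) = f v) ->
          forall a, h a = g a)).

(* Pin(V): the subgroup of the units of C(V) generated by the unit vectors,
   i.e. the set of finite products of unit vectors (unit vectors are units,
   with inverse -u, so the generated monoid is already the group). *)
Definition in_pin (R : realType) (d : nat) (A : algType R)
    (iota : {linear 'rV[R]_d -> A}) (c : A) : Prop :=
  exists us : seq 'rV[R]_d,
    (forall u, u \in us -> sqnorm u = 1) /\ c = \prod_(u <- us) iota u.

(* rho(c) = M for the twisted adjoint double cover rho : Pin(V) -> O(V),
   rho(c)(v) = alpha(c) v c^-1, where alpha is the grade automorphism of C(V)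
   (v |-> -v).  Stated without inverse: alpha(c) v = rho(c)(v) c.
   For a unit vector u this gives rho(u)(v) = u v u = v - 2<u,v>u, the
   reflection in u^perp. *)
Definition rho_is (R : realType) (d : nat) (A : algType R)
    (iota : {linear 'rV[R]_d -> A}) (alpha : {lrmorphism A -> A})
    (c : A) (M : 'M[R]_d) : Prop :=
  forall v, alpha c * iota v = iota (v *m M) * c.

From HB Require Import structures.
From mathcomp Require Import all_boot all_order all_algebra all_fingroup.
From mathcomp Require Import reals zify.
From mathcomp.algebra_tactics Require Import ring lra.
Import Order.TTheory GRing.Theory Num.Theory.
Local Open Scope ring_scope.
Set Implicit Arguments. Unset Strict Implicit. Unset Printing Implicit Defensive.

(* P := pi(s_i) and Q := pi(s_k) are commuting symmetric involutions, so V is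
   the orthogonal sum of their joint eigenspaces; take orthonormal bases us, vs,
   ws of the (-1,-1), (-1,+1) and (+1,-1) eigenspaces, of sizes a, b, b'.  Then
   P and Q are the products of the reflections in us ++ vs and us ++ ws, i.e.
   the twisted adjoint actions of the Clifford products C and E of these
   vectors.  A Pin element acting trivially commutes with every vector (an odd
   one would square to zero), so c_i and c_k are C and E up to such central
   factors, and since orthogonal vectors anticommute,
   c_i c_k = (-1)^(ab + ab' + bb') c_k c_i.  As s_i and s_k are conjugate,
   tr P = tr Q gives b = b'; as s_1 s_3 is conjugate to s_i s_k,
   h_pi = (d - tr PQ) / 2 = 2b.  Hence the sign is (-1)^(h_pi / 2). *)

Section Euclidean.
Variables (R : realType) (d : nat).
Implicit Types (u v w : 'rV[R]_d) (ws : seq 'rV[R]_d).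

Definition dot u w : R := (u *m w^T) 0 0.

Lemma mulmx_tr_dot u w : u *m w^T = (dot u w)%:M.
Proof. exact: mx11_scalar. Qed.

Lemma dotC u w : dot u w = dot w u.
Proof. by rewrite /dot -[w *m u^T]trmxK trmx_mul trmxK [RHS]mxE. Qed.

Lemma dotDl u v w : dot (u + v) w = dot u w + dot v w.
Proof. by rewrite /dot mulmxDl [LHS]mxE. Qed.

Lemma dotDr u v w : dot u (v + w) = dot u v + dot u w.
Proof. by rewrite !(dotC u) dotDl. Qed.

Lemma sqnormD u w : sqnorm (u + w) = sqnorm u + sqnorm w + 2 * dot u w.
Proof.
have sq x : sqnorm x = dot x x by [].
by rewrite !sq dotDl !dotDr (dotC w u); ring.
Qed.

Lemma sqnormZ (k : R) w : sqnorm (k *: w) = k ^+ 2 * sqnorm w.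
Proof. by rewrite /sqnorm linearZ /= -scalemxAl -scalemxAr scalerA mxE expr2. Qed.

Lemma sqnormN w : sqnorm (- w) = sqnorm w.
Proof. by rewrite -scaleN1r sqnormZ sqrrN expr1n mul1r. Qed.

Lemma sqnorm_ge0 w : 0 <= sqnorm w.
Proof. by rewrite /sqnorm !mxE sumr_ge0 // => j _; rewrite mxE -expr2 sqr_ge0. Qed.

Lemma sqnorm_eq0 w : (sqnorm w == 0) = (w == 0).
Proof.
apply/idP/eqP => [|->]; last by rewrite /sqnorm mul0mx mxE.
rewrite /sqnorm mxE psumr_eq0 => [/allP w0|j _]; last by rewrite mxE -expr2 sqr_ge0.
apply/rowP => j; have := w0 j (mem_index_enum j); rewrite mxE -expr2 sqrf_eq0.
by rewrite mxE => /eqP.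
Qed.

Definition orthonormal ws : Prop :=
  {in ws, forall u, sqnorm u = 1} /\ pairwise (fun u w => dot u w == 0) ws.

Lemma orthonormal_subseq ws1 ws2 :
  subseq ws1 ws2 -> orthonormal ws2 -> orthonormal ws1.
Proof.
move=> sub [unit orth]; split; last exact: subseq_pairwise orth.
by move=> u /(mem_subseq sub)/unit.
Qed.

Lemma orthonormal_cat ws1 ws2 :
  orthonormal ws1 -> orthonormal ws2 -> {in ws1 & ws2, forall u w, dot u w = 0} ->
  orthonormal (ws1 ++ ws2).
Proof.
move=> [unit1 orth1] [unit2 orth2] orth12; split.
  by move=> u; rewrite mem_cat => /orP[/unit1|/unit2].
by rewrite pairwise_cat orth1 orth2 !andbT; apply/allrelP => u w ? ?; rewrite orth12.
Qed.

Lemma orthonormal_cat_orth ws1 ws2 :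
  orthonormal (ws1 ++ ws2) -> {in ws1 & ws2, forall u w, dot u w = 0}.
Proof.
by move=> [_]; rewrite pairwise_cat => /and3P[/allrelP orth _ _] u w ? ?; apply/eqP/orth.
Qed.

Lemma orthonormal_cat3 us vs ws :
  orthonormal (us ++ vs ++ ws) ->
  [/\ orthonormal (us ++ vs), orthonormal (us ++ ws) & orthonormal (vs ++ ws)].
Proof.
move=> on_all; split; apply: orthonormal_subseq on_all.
- by rewrite catA prefix_subseq.
- exact: cat_subseq (subseq_refl _) (suffix_subseq _ _).
- exact: suffix_subseq.
Qed.

Lemma orthonormal_cons u ws :
  orthonormal (u :: ws) <->
  [/\ sqnorm u = 1, {in ws, forall w, dot u w = 0} & orthonormal ws].
Proof.
rewrite /orthonormal pairwise_cons; split.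
  move=> [unit /andP[/allP orth orth_ws]]; split=> [|w /orth/eqP //|].
  - exact/unit/mem_head.
  - by split=> // w w_ws; apply/unit; rewrite inE w_ws orbT.
move=> [unit_u orth [unit_ws orth_ws]]; split.
  by move=> w; rewrite inE => /predU1P[->|/unit_ws].
by rewrite orth_ws andbT; apply/allP => w /orth ->.
Qed.

Definition projmx ws : 'M[R]_d := \sum_(u <- ws) u^T *m u.

Definition reflmx u : 'M[R]_d := 1%:M - 2 *: (u^T *m u).

Definition reflprod ws : 'M[R]_d := foldr (fun u M => M *m reflmx u) 1%:M ws.

Lemma projmx_cat ws1 ws2 : projmx (ws1 ++ ws2) = projmx ws1 + projmx ws2.
Proof. exact: big_cat. Qed.

Lemma trmx_projmx ws : (projmx ws)^T = projmx ws.
Proof. by rewrite /projmx raddf_sum; apply: eq_bigr => u _ /=; rewrite trmx_mul trmxK. Qed.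

Lemma mulmx_projmx_orth ws u : {in ws, forall w, dot u w = 0} -> u *m projmx ws = 0.
Proof.
move=> orth; rewrite /projmx mulmx_sumr big1_seq // => w /andP[_ w_ws].
by rewrite mulmxA mulmx_tr_dot orth // mul_scalar_mx scale0r.
Qed.

Lemma projmx_mul_tr_orth ws u : {in ws, forall w, dot u w = 0} -> projmx ws *m u^T = 0.
Proof. by move=> orth; rewrite -[LHS]trmxK trmx_mul trmxK trmx_projmx mulmx_projmx_orth ?trmx0. Qed.

Lemma projmx_fix ws u : orthonormal ws -> u \in ws -> u *m projmx ws = u.
Proof.
elim: ws => // w ws IH /orthonormal_cons[unit_w orth_w on_ws].
rewrite /projmx big_cons -/(projmx ws) mulmxDr mulmxA mulmx_tr_dot mul_scalar_mx.
rewrite inE => /predU1P[->|u_ws]; first by rewrite [dot w w]unit_w scale1r mulmx_projmx_orth ?addr0.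
by rewrite dotC orth_w // scale0r add0r IH.
Qed.

Lemma mxtrace_projmx ws :
  {in ws, forall u, sqnorm u = 1} -> \tr (projmx ws) = (size ws)%:R.
Proof.
elim: ws => [|u ws IH] unit; first by rewrite /projmx big_nil linear0.
rewrite /projmx big_cons mxtraceD -/(projmx ws) IH => [|w w_ws]; last first.
  by apply: unit; rewrite inE w_ws orbT.
by rewrite mxtrace_mulC mulmx_tr_dot [dot u u]unit ?mem_head // mxtrace1 nat1r.
Qed.

Lemma reflprod_orthonormal ws :
  orthonormal ws -> reflprod ws = 1%:M - 2 *: projmx ws.
Proof.
elim: ws => [|u ws IH]; first by rewrite /projmx big_nil scaler0 subr0.
move=> /orthonormal_cons[_ orth_u on_ws] /=; rewrite IH // /reflmx /projmx big_cons.
rewrite -/(projmx ws) mulmxBl mul1mx mulmxBr mulmx1 -scalemxAl -scalemxAr.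
rewrite mulmxA projmx_mul_tr_orth // mul0mx !scaler0 subr0 scalerDr opprD.
by rewrite addrA.
Qed.

Lemma mxtrace_reflprod ws :
  orthonormal ws -> \tr (reflprod ws) = d%:R - 2 * (size ws)%:R.
Proof.
move=> on_ws; rewrite reflprod_orthonormal // raddfB /= mxtrace1 mxtraceZ.
by rewrite mxtrace_projmx //; case: on_ws.
Qed.

Lemma mxtrace_mul_tr_ge0 m n (M : 'M[R]_(m, n)) : 0 <= \tr (M *m M^T).
Proof.
rewrite /mxtrace sumr_ge0 // => i _; rewrite mxE sumr_ge0 // => j _.
by rewrite mxE -expr2 sqr_ge0.
Qed.

Lemma exists_unit_fix (E : 'M[R]_d) :
  E *m E = E -> E != 0 -> exists2 u, sqnorm u = 1 & u *m E = u.
Proof.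
move=> E_idem E_neq0; have /existsP[i w_neq0] : [exists i, row i E != 0].
  rewrite -negb_forall; apply: contra E_neq0 => /forallP E0.
  by apply/eqP/row_matrixP => i; rewrite row0; apply/eqP/E0.
set w := row i E in w_neq0; have w_pos : 0 < sqnorm w.
  by rewrite lt_def sqnorm_eq0 w_neq0 sqnorm_ge0.
exists ((Num.sqrt (sqnorm w))^-1 *: w).
  by rewrite sqnormZ exprVn sqr_sqrtr ?mulVf ?gt_eqF // ltW.
by rewrite -scalemxAl -row_mul E_idem.
Qed.

(* Induction on a bound for [\tr E]: split off a unit vector [u] fixed by [E],
   leaving the projection [E - u^T *m u] of trace [\tr E - 1]. *)
Lemma exists_orthonormal_basis (E : 'M[R]_d) :
  E^T = E -> E *m E = E -> exists2 ws, orthonormal ws & projmx ws = E.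
Proof.
have [N trE_lt] : exists N : nat, \tr E < N%:R.
  by exists (Num.truncn (\tr E)).+1; apply: truncnS_gt.
elim: N E trE_lt => [|N IH] E trE_lt E_sym E_idem.
  by move: trE_lt; rewrite -{1}E_idem -{2}E_sym ltNge mxtrace_mul_tr_ge0.
have [->|E_neq0] := eqVneq E 0; first by exists [::]; rewrite /projmx ?big_nil.
have [u unit_u uE] := exists_unit_fix E_idem E_neq0.
have Eu : E *m u^T = u^T by rewrite -{1}E_sym -trmx_mul uE.
have uu : u *m u^T = 1%:M by rewrite mulmx_tr_dot [dot u u]unit_u.
pose E' := E - u^T *m u.
have E'_sym : E'^T = E' by rewrite linearB /= E_sym trmx_mul trmxK.
have E'_idem : E' *m E' = E'.
  rewrite mulmxBl !mulmxBr E_idem mulmxA Eu -mulmxA uE !mulmxA -(mulmxA u^T) uu.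
  by rewrite mulmx1 subrr subr0.
have trE' : \tr E' < N%:R.
  move: trE_lt; rewrite raddfB /= mxtrace_mulC uu mxtrace1 -natr1; lra.
have [ws on_ws projE'] := IH E' trE' E'_sym E'_idem.
exists (u :: ws); last by rewrite /projmx big_cons -/(projmx ws) projE' addrC subrK.
apply/orthonormal_cons; split=> // x x_ws; rewrite dotC.
rewrite -(projmx_fix on_ws x_ws) projE' /dot -mulmxA mulmxBl Eu -mulmxA uu mulmx1.
by rewrite subrr mulmx0 mxE.
Qed.

Lemma orthonormal_basis_ext ws (E : 'M[R]_d) :
  orthonormal ws -> E^T = E -> E *m E = E -> projmx ws *m E = 0 ->
  exists2 ws', orthonormal (ws ++ ws') & projmx ws' = E.
Proof.
move=> on_ws E_sym E_idem orth.
have [ws' on_ws' projE] := exists_orthonormal_basis E_sym E_idem.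
exists ws' => //; apply: orthonormal_cat => // u w u_ws w_ws'.
rewrite /dot -(projmx_fix on_ws u_ws) -(projmx_fix on_ws' w_ws') trmx_mul projE E_sym.
by rewrite mulmxA -(mulmxA u) orth mulmx0 mul0mx mxE.
Qed.

Definition negproj (P : 'M[R]_d) : 'M[R]_d := 2^-1 *: (1%:M - P).

Lemma trmx_negproj P : P^T = P -> (negproj P)^T = negproj P.
Proof. by move=> P_sym; rewrite /negproj linearZ linearB /= trmx1 P_sym. Qed.

Lemma negproj_idem P : P *m P = 1%:M -> negproj P *m negproj P = negproj P.
Proof.
move=> P_inv; have sq : (1%:M - P) *m (1%:M - P) = 2 *: (1%:M - P).
  by rewrite mulmxBl !mulmxBr !mul1mx mulmx1 P_inv opprB scaler_nat mulr2n.
rewrite /negproj -scalemxAl -scalemxAr sq !scalerA -mulrA mulVf ?pnatr_eq0 //.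
by rewrite mulr1.
Qed.

Lemma negprojK P : 1%:M - 2 *: negproj P = P.
Proof. by rewrite /negproj scalerA mulfV ?pnatr_eq0 // scale1r opprB addrC subrK. Qed.

Lemma negproj_comm P Q :
  P *m Q = Q *m P -> negproj P *m negproj Q = negproj Q *m negproj P.
Proof.
move=> PQ; rewrite /negproj -!scalemxAl -!scalemxAr !mulmxBl !mulmxBr !mul1mx !mulmx1 PQ.
by apply/matrixP => i j; rewrite !mxE; ring.
Qed.

Lemma subproj_idem (e f : 'M[R]_d) :
  e^T = e -> f^T = f -> e *m e = e -> f *m f = f -> e *m f = f ->
  (e - f) *m (e - f) = e - f /\ f *m (e - f) = 0.
Proof.
move=> e_sym f_sym e_idem f_idem ef.
have fe : f *m e = f by rewrite -[LHS]trmxK trmx_mul e_sym f_sym ef f_sym.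
by rewrite mulmxBl !mulmxBr e_idem ef fe f_idem !subrr subr0.
Qed.

Lemma mulmx_sub2 (p q : 'M[R]_d) :
  (1%:M - 2 *: p) *m (1%:M - 2 *: q) = 1%:M - 2 *: ((p - p *m q) + (q - p *m q)).
Proof.
rewrite mulmxBl mul1mx !mulmxBr mulmx1 -!scalemxAl -!scalemxAr.
by apply/matrixP => i j; rewrite !mxE; ring.
Qed.

Lemma commuting_involutions_basis (P Q : 'M[R]_d) :
  P^T = P -> Q^T = Q -> P *m P = 1%:M -> Q *m Q = 1%:M -> P *m Q = Q *m P ->
  exists us vs ws, [/\ orthonormal (us ++ vs ++ ws), reflprod (us ++ vs) = P,
                       reflprod (us ++ ws) = Q & reflprod (vs ++ ws) = P *m Q].
Proof.
move=> P_sym Q_sym P_inv Q_inv PQ.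
have p_sym := trmx_negproj P_sym; have q_sym := trmx_negproj Q_sym.
have p_idem := negproj_idem P_inv; have q_idem := negproj_idem Q_inv.
have pq := negproj_comm PQ.
set p := negproj P in p_sym p_idem pq *; set q := negproj Q in q_sym q_idem pq *.
set r := p *m q.
have r_sym : r^T = r by rewrite trmx_mul p_sym q_sym -pq.
have pr : p *m r = r by rewrite mulmxA p_idem.
have qr : q *m r = r by rewrite mulmxA -pq -mulmxA q_idem.
have r_idem : r *m r = r by rewrite {1}/r -mulmxA qr.
have [pr_idem r_pr] := subproj_idem p_sym r_sym p_idem r_idem pr.
have [qr_idem _] := subproj_idem q_sym r_sym q_idem r_idem qr.
have sub_sym e : e^T = e -> (e - r)^T = e - r by move=> e_sym; rewrite linearB /= e_sym r_sym.
have [us on_us proj_us] : exists2 us, orthonormal ([::] ++ us) & projmx us = r.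
  by apply: orthonormal_basis_ext; rewrite /projmx ?big_nil ?mul0mx.
have [vs on_usvs proj_vs] : exists2 vs, orthonormal (us ++ vs) & projmx vs = p - r.
  by apply: orthonormal_basis_ext; rewrite ?sub_sym ?proj_us.
have [ws on_all proj_ws] : exists2 ws, orthonormal ((us ++ vs) ++ ws) & projmx ws = q - r.
  apply: orthonormal_basis_ext; rewrite ?sub_sym // projmx_cat proj_us proj_vs addrC subrK.
  by rewrite mulmxBr -/r pr subrr.
rewrite -catA in on_all; have [on_uv on_uw on_vw] := orthonormal_cat3 on_all.
exists us, vs, ws; split=> //; rewrite reflprod_orthonormal // projmx_cat.
- by rewrite proj_us proj_vs subrKC negprojK.
- by rewrite proj_us proj_ws subrKC negprojK.
- by rewrite proj_vs proj_ws -(negprojK P) -(negprojK Q) mulmx_sub2.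
Qed.

End Euclidean.

Lemma commr_prod_scale (R : comPzRingType) (A : algType R) (I : eqType) (r : seq I)
    (F : I -> A) (y : A) (s : R) :
  {in r, forall i, y * F i = s *: (F i * y)} ->
  y * \prod_(i <- r) F i = s ^+ size r *: (\prod_(i <- r) F i * y).
Proof.
elim: r => [|i r IH] yF; first by rewrite !big_nil mulr1 mul1r scale1r.
rewrite !big_cons mulrA yF ?mem_head // -scalerAl -[F i * y * _]mulrA IH => [|j j_r].
  by rewrite -scalerAr scalerA -exprS mulrA.
by apply: yF; rewrite inE j_r orbT.
Qed.

Lemma lmod_eqNr (F : numFieldType) (V : lmodType F) (x : V) : (- x == x) = (x == 0).
Proof. by rewrite eq_sym -addr_eq0 -mulr2n -scaler_nat scaler_eq0 pnatr_eq0. Qed.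

Lemma commute_sign_iff (F : numFieldType) (A : algType F) (x y : A) (m : nat) :
  x * x = 1 -> y * y = 1 -> x * y = (-1) ^+ m *: (y * x) ->
  (x * y = y * x <-> ~~ odd m).
Proof.
rewrite -signr_odd; case: (odd m) => /= xx yy; last by rewrite scale1r.
rewrite scaleN1r => xy_anti; split=> // xy_comm.
have yx0 : y * x = 0 by apply/eqP; rewrite -lmod_eqNr -xy_anti xy_comm.
by rewrite -(oner_eq0 A) -yy -{1}[y]mulr1 -xx mulrA yx0 !mul0r.
Qed.

Section Clifford.
Variables (R : realType) (d : nat) (A : algType R) (iota : {linear 'rV[R]_d -> A}).
Hypothesis iota_sq : forall v, iota v * iota v = - (sqnorm v)%:A.
Implicit Types (u v w : 'rV[R]_d) (ws : seq 'rV[R]_d).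

Lemma iota_anticomm u w : iota u * iota w + iota w * iota u = - (2 * dot u w)%:A.
Proof.
have := iota_sq (u + w); rewrite linearD /= mulrDl !mulrDr !iota_sq sqnormD.
rewrite !scalerDl !opprD => sq_uw.
apply: (@addrI _ (- (sqnorm u)%:A - (sqnorm w)%:A)).
by rewrite -sq_uw addrACA (addrC (- (sqnorm w)%:A)).
Qed.

Lemma iota_anticomm_orth u w : dot u w = 0 -> iota u * iota w = - (iota w * iota u).
Proof.
by move=> uw0; apply/eqP; rewrite -addr_eq0 iota_anticomm uw0 mulr0 scale0r oppr0.
Qed.

Lemma iota_reflmx u v :
  sqnorm u = 1 -> - iota u * iota v = iota (v *m reflmx u) * iota u.
Proof.
move=> unit_u; rewrite /reflmx mulmxBr mulmx1 -scalemxAr mulmxA mulmx_tr_dot.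
rewrite mul_scalar_mx scalerA linearB linearZ /= mulrBl -scalerAl iota_sq unit_u.
have := iota_anticomm v u; rewrite mulNr => /(canRL (addrK _)) ->.
by rewrite scalerN scalerA mulr1 addrAC subrr add0r.
Qed.

Definition clprod ws : A := \prod_(w <- ws) iota w.

Lemma clprod_cons u ws : clprod (u :: ws) = iota u * clprod ws.
Proof. exact: big_cons. Qed.

Lemma clprod_cat ws1 ws2 : clprod (ws1 ++ ws2) = clprod ws1 * clprod ws2.
Proof. exact: big_cat. Qed.

Lemma clprod_revN ws : clprod (map -%R (rev ws)) = \prod_(w <- rev ws) - iota w.
Proof. by rewrite /clprod big_map; apply: eq_bigr => w _; rewrite linearN. Qed.

Lemma clprodK ws :
  {in ws, forall u, sqnorm u = 1} -> clprod ws * clprod (map -%R (rev ws)) = 1.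
Proof.
elim: ws => [|u ws IH] unit; first by rewrite /clprod !big_nil mulr1.
rewrite clprod_revN rev_cons big_rcons -clprod_revN clprod_cons mulrA -(mulrA (iota u)).
rewrite IH => [|w w_ws]; last by apply: unit; rewrite inE w_ws orbT.
by rewrite mulr1 mulrN iota_sq unit ?mem_head // opprK scale1r.
Qed.

Lemma clprodVK ws :
  {in ws, forall u, sqnorm u = 1} -> clprod (map -%R (rev ws)) * clprod ws = 1.
Proof.
elim: ws => [|u ws IH] unit; first by rewrite /clprod !big_nil mulr1.
rewrite clprod_revN rev_cons big_rcons -clprod_revN clprod_cons mulrA -(mulrA _ (- _)).
rewrite mulNr iota_sq unit ?mem_head // opprK scale1r mulr1 IH // => w w_ws.
by apply: unit; rewrite inE w_ws orbT.
Qed.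

Lemma clprod_comm_sign ws1 ws2 :
  {in ws1 & ws2, forall u w, dot u w = 0} ->
  clprod ws2 * clprod ws1 = (-1) ^+ (size ws1 * size ws2) *: (clprod ws1 * clprod ws2).
Proof.
move=> orth; rewrite mulnC exprM; apply: commr_prod_scale => u u_ws1.
suff -> : iota u * clprod ws2 = (-1) ^+ size ws2 *: (clprod ws2 * iota u).
  by rewrite signrZK.
apply: commr_prod_scale => w w_ws2.
by rewrite iota_anticomm_orth ?orth // scaleN1r.
Qed.

Lemma clprod_cat3_comm_sign us vs ws :
  orthonormal (us ++ vs ++ ws) ->
  clprod (us ++ vs) * clprod (us ++ ws) =
  (-1) ^+ (size us * size vs + size us * size ws + size vs * size ws) *:
    (clprod (us ++ ws) * clprod (us ++ vs)).
Proof.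
move=> on_all; have [on_uv on_uw on_vw] := orthonormal_cat3 on_all.
have uv := orthonormal_cat_orth on_uv; have uw := orthonormal_cat_orth on_uw.
have vw := orthonormal_cat_orth on_vw.
rewrite !clprod_cat; set a := clprod us; set b := clprod vs; set c := clprod ws.
have -> : a * b * (a * c) = (-1) ^+ (size us * size vs) *: (a * a * (b * c)).
  by rewrite -mulrA (mulrA b) (clprod_comm_sign uv) -scalerAl -scalerAr !mulrA.
have -> : a * c * (a * b) =
    (-1) ^+ (size us * size ws + size vs * size ws) *: (a * a * (b * c)).
  rewrite -mulrA (mulrA c) (clprod_comm_sign uw) -scalerAl -scalerAr -!mulrA.
  by rewrite (clprod_comm_sign vw) -!scalerAr scalerA -exprD.
by rewrite -addnA exprD -scalerA signrZK.
Qed.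

Variable alpha : {lrmorphism A -> A}.
Hypothesis alpha_iota : forall v, alpha (iota v) = - iota v.

Lemma alpha_clprod ws : alpha (clprod ws) = (-1) ^+ size ws *: clprod ws.
Proof.
elim: ws => [|u ws IH]; first by rewrite /clprod big_nil rmorph1 scale1r.
by rewrite clprod_cons rmorphM /= alpha_iota IH exprS -scalerA scalerAr scaleN1r mulNr.
Qed.

Lemma rho_is_mul c e M N :
  rho_is iota alpha c M -> rho_is iota alpha e N -> rho_is iota alpha (c * e) (N *m M).
Proof. by move=> rho_c rho_e v; rewrite rmorphM -mulrA rho_e mulrA rho_c mulmxA mulrA. Qed.

Lemma rho_is_inv c c' M M' : c * c' = 1 -> c' * c = 1 -> M' *m M = 1%:M ->
  rho_is iota alpha c M -> rho_is iota alpha c' M'.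
Proof.
move=> cc' c'c MM' rho_c v; rewrite -[LHS]mulr1 -cc' mulrA -(mulrA _ (iota v)).
have -> : iota v * c = alpha c * iota (v *m M') by rewrite rho_c -mulmxA MM' mulmx1.
by rewrite mulrA -rmorphM c'c rmorph1 mul1r.
Qed.

Lemma rho_is_clprod ws :
  {in ws, forall u, sqnorm u = 1} -> rho_is iota alpha (clprod ws) (reflprod ws).
Proof.
elim: ws => [|u ws IH] unit v.
  by rewrite /clprod big_nil rmorph1 mulr1 mul1r mulmx1.
rewrite clprod_cons; apply: rho_is_mul => [w|].
  by rewrite alpha_iota iota_reflmx // unit ?mem_head.
by apply: IH => w w_ws; apply: unit; rewrite inE w_ws orbT.
Qed.

(* If [zs] had odd length, [z] would anticommute with every vector, hence with
   itself, so [z * z = 0] although [z] is invertible. *)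
Lemma rho_is1_comm zs : {in zs, forall u, sqnorm u = 1} ->
  rho_is iota alpha (clprod zs) 1%:M -> forall v, GRing.comm (clprod zs) (iota v).
Proof.
move=> unit rho1; set z := clprod zs.
have twist v : (-1) ^+ size zs *: (z * iota v) = iota v * z.
  by rewrite scalerAl -alpha_clprod rho1 mulmx1.
suff even_zs : ~~ odd (size zs).
  by move=> v; rewrite /GRing.comm -twist -signr_odd (negbTE even_zs) scale1r.
apply/negP => odd_zs; have /eqP := oner_neq0 A; apply.
have sgn : (-1) ^+ size zs = -1 :> R by rewrite -signr_odd odd_zs.
have zz : z * z = - (z * z).
  rewrite -scaleN1r -sgn; apply: commr_prod_scale => w _.
  by rewrite -twist sgn !scaleN1r opprK.
have zz0 : z * z = 0 by apply/eqP; rewrite -lmod_eqNr -zz.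
by rewrite -(clprodK unit) -/z -[z]mulr1 -(clprodK unit) -/z mulrA zz0 !mul0r.
Qed.

Lemma pin_central_factor c cs (P : 'M[R]_d) :
  in_pin iota c -> {in cs, forall u, sqnorm u = 1} -> rho_is iota alpha c P ->
  reflprod cs = P -> P *m P = 1%:M ->
  exists zs, c = clprod zs * clprod cs /\ forall v, GRing.comm (clprod zs) (iota v).
Proof.
move=> [us [unit_us ->]] unit_cs rho_c reflP P_inv; set cs' := map -%R (rev cs).
have unit_cs' : {in cs', forall u, sqnorm u = 1}.
  by move=> u /mapP[w w_cs ->]; rewrite sqnormN unit_cs // -mem_rev.
exists (us ++ cs'); split; first by rewrite clprod_cat -mulrA clprodVK // mulr1.
apply: rho_is1_comm => [u|]; first by rewrite mem_cat => /orP[/unit_us|/unit_cs'].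
rewrite clprod_cat -P_inv; apply: rho_is_mul rho_c _.
apply: rho_is_inv (clprodK unit_cs) (clprodVK unit_cs) P_inv _.
by rewrite -reflP; apply: rho_is_clprod.
Qed.

Lemma pin_commute_sign us vs ws (P Q : 'M[R]_d) (c e : A) :
  orthonormal (us ++ vs ++ ws) -> reflprod (us ++ vs) = P -> reflprod (us ++ ws) = Q ->
  P *m P = 1%:M -> Q *m Q = 1%:M -> in_pin iota c -> in_pin iota e ->
  rho_is iota alpha c P -> rho_is iota alpha e Q ->
  c * e = (-1) ^+ (size us * size vs + size us * size ws + size vs * size ws) *: (e * c).
Proof.
move=> on_all reflP reflQ P_inv Q_inv pin_c pin_e rho_c rho_e.
have [[unit_uv _] [unit_uw _] _] := orthonormal_cat3 on_all.
have [zs [-> z_comm]] := pin_central_factor pin_c unit_uv rho_c reflP P_inv.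
have [ys [-> y_comm]] := pin_central_factor pin_e unit_uw rho_e reflQ Q_inv.
have zC xs : GRing.comm (clprod zs) (clprod xs) by apply: commr_prod => w _.
have yC xs : GRing.comm (clprod ys) (clprod xs) by apply: commr_prod => w _.
set z := clprod zs; set y := clprod ys; set C := clprod (us ++ vs); set E := clprod (us ++ ws).
have -> : z * C * (y * E) = z * y * (C * E) by rewrite -mulrA (mulrA C) -yC !mulrA.
have -> : y * E * (z * C) = z * y * (E * C) by rewrite -mulrA (mulrA E) -zC !mulrA -zC.
by rewrite clprod_cat3_comm_sign // -scalerAr.
Qed.

End Clifford.

Lemma adjtrE n i (lt_i1 : (i.-1 < n)%N) (lt_i : (i < n)%N) :
  adjtr n i = tperm (Ordinal lt_i1) (Ordinal lt_i).
Proof.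
rewrite /adjtr; case: insubP => [a _ a_val|]; last by rewrite lt_i1.
by case: insubP => [b _ b_val|]; [congr tperm; apply: val_inj | rewrite lt_i].
Qed.

Lemma adjtr_invol n i : (adjtr n i * adjtr n i = 1)%g.
Proof.
by rewrite /adjtr; case: insubP => [a _ _|_]; [case: insubP => [b _ _|_] |]; rewrite ?tperm2 ?mulg1.
Qed.

Lemma exists_perm_map n (xs ys : seq 'I_n) :
  uniq xs -> uniq ys -> size xs = size ys -> exists g : 'S_n, map g xs = ys.
Proof.
elim: xs ys => [|x xs IH] [|y ys] //=; first by exists 1%g.
move=> /andP[x_xs uniq_xs] /andP[y_ys uniq_ys] [size_eq].
have [g gxs] := IH ys uniq_xs uniq_ys size_eq.
exists (g * tperm (g x) y)%g; rewrite permM tpermL; congr (_ :: _).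
rewrite -gxs; apply/eq_in_map => z z_xs /=; rewrite permM tpermD //.
  by rewrite (inj_eq perm_inj); apply: contraNneq x_xs => ->.
by apply: contraNneq y_ys => ->; rewrite -gxs map_f.
Qed.

Section AdjacentTranspositions.
Variables (n i k : nat).
Hypotheses (hi : (1 <= i <= n.-1)%N) (hk : (1 <= k <= n.-1)%N).

Let lt_i1 : (i.-1 < n)%N. Proof. lia. Qed.
Let lt_i : (i < n)%N. Proof. lia. Qed.
Let lt_k1 : (k.-1 < n)%N. Proof. lia. Qed.
Let lt_k : (k < n)%N. Proof. lia. Qed.
Let adjtr_i : adjtr n i = tperm (Ordinal lt_i1) (Ordinal lt_i) := adjtrE lt_i1 lt_i.
Let adjtr_k : adjtr n k = tperm (Ordinal lt_k1) (Ordinal lt_k) := adjtrE lt_k1 lt_k.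

Lemma adjtr_conj : exists g : 'S_n, adjtr n k = (adjtr n i ^ g)%g.
Proof.
have [g [g_i1 g_i]] : exists g : 'S_n, map g [:: Ordinal lt_i1; Ordinal lt_i] =
                                      [:: Ordinal lt_k1; Ordinal lt_k].
  by apply: exists_perm_map; rewrite //= !inE andbT -(inj_eq val_inj) /=; lia.
by exists g; rewrite adjtr_i adjtr_k tpermJ g_i1 g_i.
Qed.

Hypothesis far : (i.+1 < k)%N || (k.+1 < i)%N.

Lemma adjtr_commute : commute (adjtr n i) (adjtr n k).
Proof.
by rewrite /commute adjtr_i adjtr_k conjgC tpermJ !tpermD // -(inj_eq val_inj) /=; lia.
Qed.

Lemma adjtr_pair_conj :
  (4 <= n)%N -> exists g : 'S_n, (adjtr n i * adjtr n k = (adjtr n 1 * adjtr n 3) ^ g)%g.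
Proof.
move=> n_ge4; have lt m : (m < 4)%N -> (m < n)%N by lia.
have [g [g0 g1 g2 g3]] : exists g : 'S_n,
    map g [:: Ordinal (lt 0 isT); Ordinal (lt 1 isT); Ordinal (lt 2 isT); Ordinal (lt 3 isT)] =
    [:: Ordinal lt_i1; Ordinal lt_i; Ordinal lt_k1; Ordinal lt_k].
  by apply: exists_perm_map; rewrite // -(map_inj_uniq val_inj) /= !inE; lia.
exists g; rewrite (adjtrE (i:=1) (lt 0 isT) (lt 1 isT)) (adjtrE (i:=3) (lt 2 isT) (lt 3 isT)).
by rewrite adjtr_i adjtr_k conjMg !tpermJ g0 g1 g2 g3.
Qed.

End AdjacentTranspositions.

Section Representation.
Variables (R : realType) (n d : nat) (pi : 'S_n -> 'M[R]_d).
Hypothesis pi_mul : forall s t : 'S_n, pi (s * t)%g = pi s *m pi t.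

Lemma character_conjg s g : character pi (s ^ g)%g = character pi s.
Proof.
by rewrite /character conjgE !pi_mul mxtrace_mulC -mulmxA -!pi_mul mulgV mulg1.
Qed.

Hypothesis pi_orth : forall s : 'S_n, pi s *m (pi s)^T = 1%:M.

Lemma pi1 : pi 1%g = 1%:M.
Proof. by rewrite -[LHS]mulmx1 -(pi_orth 1) mulmxA -pi_mul mulg1 pi_orth. Qed.

Lemma pi_invol s : (s * s = 1)%g -> pi s *m pi s = 1%:M.
Proof. by move=> ss; rewrite -pi_mul ss pi1. Qed.

Lemma pi_sym s : (s * s = 1)%g -> (pi s)^T = pi s.
Proof. by move=> ss; rewrite -[_^T]mul1mx -(pi_invol ss) -mulmxA pi_orth mulmx1. Qed.

End Representation.

Lemma double_eq_mul4_iff (R : numDomainType) (b : nat) :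
  (exists z : int, (b + b)%:R = (4 * z)%:~R :> R) <-> ~~ odd b.
Proof.
have half_b := odd_double_half b; split=> [[z]|even_b].
  rewrite -[(b + b)%:R]/((b + b)%:Z%:~R) => /intr_inj.
  by move: half_b; case: (odd b) => /=; lia.
exists (b./2)%:Z; rewrite -[(b + b)%:R]/((b + b)%:Z%:~R); congr (_%:~R).
by move: even_b half_b; case: (odd b) => //= _; lia.
Qed.

Theorem proposition3p3 (R : realType) (n d : nat) (pi : 'S_n -> 'M[R]_d)
  (hn : (4 <= n)%N)
  (pi_mul : forall s t : 'S_n, pi (s * t)%g = pi s *m pi t)
  (pi_orth : forall s : 'S_n, pi s *m (pi s)^T = 1%:M)
  (A : algType R) (iota : {linear 'rV[R]_d -> A}) (hA : is_clifford iota)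
  (alpha : {lrmorphism A -> A}) (halpha : forall v, alpha (iota v) = - iota v)
  (i k : nat) (hi : (1 <= i <= n.-1)%N) (hk : (1 <= k <= n.-1)%N)
  (hik : (i.+1 < k)%N || (k.+1 < i)%N)
  (ci ck : A) (hci : in_pin iota ci) (hck : in_pin iota ck)
  (hri : rho_is iota alpha ci (pi (adjtr n i)))
  (hrk : rho_is iota alpha ck (pi (adjtr n k)))
  (hci2 : ci * ci = 1) (hck2 : ck * ck = 1) :
  ci * ck = ck * ci <-> exists z : int, h_pi pi = (4 * z)%:~R.
Proof.
have [iota_sq _] := hA.
have inv_i := pi_invol pi_mul pi_orth (adjtr_invol n i).
have inv_k := pi_invol pi_mul pi_orth (adjtr_invol n k).
have PQ : pi (adjtr n i) *m pi (adjtr n k) = pi (adjtr n k) *m pi (adjtr n i).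
  by rewrite -!pi_mul (adjtr_commute hi hk hik).
have [us [vs [ws [on_all reflP reflQ reflPQ]]]] := commuting_involutions_basis
  (pi_sym pi_mul pi_orth (adjtr_invol n i)) (pi_sym pi_mul pi_orth (adjtr_invol n k))
  inv_i inv_k PQ.
have [on_uv on_uw on_vw] := orthonormal_cat3 on_all.
have size_ws : size ws = size vs.
  have [g adjtr_k] := adjtr_conj hi hk; have := character_conjg pi_mul (adjtr n i) g.
  rewrite -adjtr_k /character -reflP -reflQ !mxtrace_reflprod // !size_cat !natrD.
  by move=> tr_eq; apply/eqP; rewrite -(eqr_nat R); apply/eqP; lra.
have h_eq : h_pi pi = (size vs + size vs)%:R.
  have [g adjtr_ik] := adjtr_pair_conj hi hk hik hn.
  rewrite /h_pi -(character_conjg pi_mul (adjtr n 1 * adjtr n 3) g) -adjtr_ik.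
  rewrite /character pi_mul -reflPQ mxtrace_reflprod // (pi1 pi_mul pi_orth) mxtrace1.
  by rewrite size_cat size_ws opprB addrC subrK mulrC mulKf ?pnatr_eq0.
have sign : ci * ck = (-1) ^+ size vs *: (ck * ci).
  rewrite (pin_commute_sign iota_sq halpha on_all reflP reflQ inv_i inv_k hci hck hri hrk).
  by rewrite size_ws -signr_odd !oddD !oddM addbb andbb signr_odd.
rewrite h_eq; exact: iff_trans (commute_sign_iff hci2 hck2 sign) (iff_sym (double_eq_mul4_iff _ _)).
Qed.
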